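(* Consider the bucketing algorithm described in the context, with arbitrary parameters $r\mid d$, $k=d/r$, $\delta$ with $\delta k\in\mathbb Z$, applied (under a fixed coordinate permutation) to a uniformly random instance of $\mathcal{CP}_{d,\lambda,\gamma}$. Let $(A_0,B_0)$ be the root and, for $i=1,\dots,r$, let $(A_i,B_i)$ be the child of $(A_{i-1},B_{i-1})$ obtained from an independent uniform $\vec z_i\in\mathbb F_2^k$. Then with $p=\binom{k}{\delta k}2^{-k}$, \[\mathbb E\big[|A_i|\cdot|B_i|\big]\le \mathbb E\big[|A_{i-1}|\cdot|B_{i-1}|\big]\,p^2+1\quad(i=1,\dots,r),\] and consequently $\mathbb E[|A_r|\cdot|B_r|]\le 2^{2\lambda d}p^{2r}+r$, the expectation being over the input lists and the choices of the $\vec z_i$.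
   Context: $\mathrm{wt}$ is Hamming weight. For $\vec v\in\mathbb F_2^d$ and $I=\{i_1<\dots<i_m\}\subseteq[d]$, $\vec v_I=(v_{i_1},\dots,v_{i_m})$. For $r\mid d$ and $i\in[r]$, the $i$-th block is $B_{i,r}=[(i-1)\frac dr+1,\ i\frac dr]$. Problem $\mathcal{CP}_{d,\lambda,\gamma}$ (uniform version): two lists $L_1=(\vec v_i)_{i\in[2^{\lambda d}]}$, $L_2=(\vec w_i)_{i\in[2^{\lambda d}]}$ of vectors in $\mathbb F_2^d$, all entries independent and uniformly random, except for one planted pair $(\vec x,\vec y)\in L_1\times L_2$ with $\mathrm{wt}(\vec x+\vec y)=\gamma d$; for every $i,j$ the vectors $\vec v_i,\vec w_j$ are independent. Bucketing step of the algorithm: the root node is $(A_0,B_0)=(L_1,L_2)$; a child of a node $(A,B)$ at level $i-1$ determined by $\vec z\in\mathbb F_2^k$ is $(A',B')$ with $A'=\{\vec v\in A:\mathrm{wt}(\vec v_{B_{i,r}}+\vec z)=\delta k\}$ and $B'=\{\vec w\in B:\mathrm{wt}(\vec w_{B_{i,r}}+\vec z)=\delta k\}$. *)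

From HB Require Import structures.
From mathcomp Require Import all_boot all_order all_algebra all_fingroup.
From mathcomp Require Import all_classical all_reals all_analysis.
Set Implicit Arguments. Unset Strict Implicit. Unset Printing Implicit Defensive.
Import Order.TTheory GRing.Theory Num.Theory.

Definition vec (n : nat) := 'rV['F_2]_n.

Definition wt (n : nat) (v : vec n) : nat := #|[set j : 'I_n | v ord0 j != 0%R]|.

(* Dimension d = r * k; the i-th block (0-based i : 'I_r) of v consists of
   the coordinates i*k, ..., i*k + k - 1 (mxvec_index i j has value i*k + j). *)
Definition blk (r k : nat) (v : vec (r * k)) (i : 'I_r) : vec k :=
  (\row_(j < k) v ord0 (mxvec_index i j))%R.

Definition permv (n : nat) (pi : 'S_n) (v : vec n) : vec n :=
  (\row_(j < n) v ord0 (pi j))%R.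

(* One bucketing step: keep the indices j in A whose (permuted) vector's
   t-th block is at distance w = delta*k from z. *)
Definition child (r k N w : nat) (pi : 'S_(r * k))
  (L : {ffun 'I_N -> vec (r * k)}) (A : {set 'I_N}) (t : 'I_r) (z : vec k)
  : {set 'I_N} :=
  [set j in A | wt (blk (permv pi (L j)) t + z)%R == w].

Fixpoint node (r k N w : nat) (pi : 'S_(r * k))
  (L : {ffun 'I_N -> vec (r * k)}) (zs : {ffun 'I_r -> vec k}) (i : nat)
  : {set 'I_N} :=
  match i with
  | 0 => [set: 'I_N]
  | i'.+1 =>
      if (insub i' : option 'I_r) is Some t
      then child w pi L (node w pi L zs i') t (zs t)
      else node w pi L zs i'
  end.

(* Sample space: the two lists, the (uniformly random) position (a,b) of the
   planted pair, and the choices z_1..z_r. *)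
Definition Omega (r k N : nat) : finType :=
  ({ffun 'I_N -> vec (r * k)} * {ffun 'I_N -> vec (r * k)} * ('I_N * 'I_N)
    * {ffun 'I_r -> vec k})%type.

(* Uniform CP_{d,lambda,gamma} instance together with uniform z's: the uniform
   distribution on Omega conditioned on wt(L1 a + L2 b) = g (= gamma d). *)
Definition good (r k N g : nat) : {set Omega r k N} :=
  [set om : Omega r k N |
     wt (om.1.1.1 om.1.2.1 + om.1.1.2 om.1.2.2)%R == g].

Definition Expect (R : realType) (r k N g : nat) (X : Omega r k N -> nat) : R :=
  ((\sum_(om in good r k N g) X om)%:R / (#|good r k N g|)%:R)%R.

Definition prodsize (r k N w : nat) (pi : 'S_(r * k)) (i : nat)
  (om : Omega r k N) : nat :=
  (#|node w pi om.1.1.1 om.2 i| * #|node w pi om.1.1.2 om.2 i|)%N.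

From HB Require Import structures.
From mathcomp Require Import all_boot all_order all_algebra all_fingroup.
From mathcomp Require Import all_classical all_reals all_analysis.
From mathcomp Require Import ring.
Import Order.TTheory GRing.Theory Num.Theory.
Local Open Scope ring_scope.

(* Write S_i for the sum of |A_i| * |B_i| over the sample
   space, so that E_i = S_i / #|good|.  A pair (j, l) of indices survives step
   t+1 iff it is in A_t x B_t and the t-th (permuted) blocks of L1 j and L2 l
   both lie at distance w from z_t.  At most one pair per outcome is the
   planted one; this contributes the "+1".  For any other pair (j, l) the
   blocks in question are uniformly distributed and independent of everything
   that decides membership in A_t x B_t: adding (x, y) in F_2^k x F_2^k to
   those two blocks (and, to preserve the planted distance, to the partner of
   j or l in the planted pair) is an involution of the sample space.
   Averaging over all (x, y) shows that the pair survives with probability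
   exactly C(k, w)^2 / 2^(2k) = p^2.  This gives the counting inequality
   [bucket_step]; dividing by #|good| gives E_i <= E_(i-1) p^2 + 1, and
   iterating from E_0 = N^2 = 2^(2 lam d) yields the second claim. *)

Set Implicit Arguments.

(* MathComp declares the finite and the Z-module structures on pairs
   separately; saturation provides their join, so that F_2^k x F_2^k is a
   finite Z-module. *)
HB.saturate prod.

Lemma translation_average (X : finZmodType) (T : finType) (S : {set T})
    (f : pred T) (c : T -> X) (P : pred X) (tr : X -> T -> T) :
  (forall x, involutive (tr x)) ->
  (forall x om, (tr x om \in S) = (om \in S)) ->
  (forall x om, f (tr x om) = f om) ->
  (forall x om, f om -> c (tr x om) = c om + x) ->
  (#|X| * \sum_(om in S) (f om && P (c om)) = #|P| * \sum_(om in S) f om)%N.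
Proof.
move=> trK trS trf trc.
have shifted (x : X) : (\sum_(om in S) (f om && P (c om))
                        = \sum_(om in S) (f om && P (c om + x)%R))%N.
  rewrite (reindex_inj (can_inj (trK x))); apply: eq_big => om; first exact: trS.
  by rewrite trf; case: (boolP (f om)) => //= /trc ->.
have hits (y : X) : (\sum_(x : X) P (y + x)%R = #|P|)%N.
  rewrite -sum1_card [RHS](reindex_inj (addrI y)) [RHS]big_mkcond /=.
  by apply: eq_bigr => x _; rewrite unfold_in; case: (P _).
rewrite -sum1_card big_distrl /=.
under eq_bigr => x _ do rewrite mul1n (shifted x).
rewrite exchange_big mulnC big_distrl /=; apply: eq_bigr => om _.
by case: (f om); rewrite /= ?hits ?mul1n // big1.
Qed.

Lemma addvv n (v : vec n) : v + v = 0.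
Proof. by apply/rowP => j; rewrite !mxE addrr_pchar2 // pchar_Fp. Qed.

Lemma card_vec k : #|{: vec k}| = (2 ^ k)%N.
Proof. by rewrite card_mx card_Fp // mul1n. Qed.

Definition support n (v : vec n) : {set 'I_n} := [set j | v ord0 j != 0].

Lemma support_bij n : bijective (@support n).
Proof.
exists (fun A : {set 'I_n} => \row_j (j \in A)%:R : vec n) => [v | A].
  apply/rowP => j; rewrite mxE inE.
  by case: (v ord0 j) => [[|[|//]]] ?; apply/val_inj.
apply/setP => j; rewrite inE mxE.
by case: (j \in A); rewrite ?oner_neq0 ?eqxx.
Qed.

Definition sphere (k w : nat) : {pred vec k} := [pred v | wt v == w].
Arguments sphere : clear implicits.

(* Weight-w vectors correspond to w-subsets through their supports. *)
Lemma card_sphere k w : #|sphere k w| = 'C(k, w).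
Proof.
rewrite -[k in RHS]card_ord -card_draws.
rewrite -(on_card_preimset (onW_bij _ (@support_bij k))).
by apply: eq_card => v; rewrite !inE.
Qed.

Section Blocks.
Variables (r k : nat) (pi : 'S_(r * k)).

Lemma blk_permvD (u v : vec (r * k)) s :
  blk (permv pi (u + v)) s = blk (permv pi u) s + blk (permv pi v) s.
Proof. by apply/rowP => j; rewrite !mxE. Qed.

Definition inblock (t : 'I_r) (x : vec k) : vec (r * k) :=
  permv pi^-1 (mxvec (\matrix_(s, j) if s == t then x ord0 j else 0)).

Lemma blk_inblock_if t x s (b : bool) :
  blk (permv pi (if b then inblock t x else 0)) s = if b && (s == t) then x else 0.
Proof.
apply/rowP => j; case: b; rewrite !mxE //= permK mxvecE mxE.
by case: eqP => //; rewrite mxE.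
Qed.

Lemma blk_inblock t x s : blk (permv pi (inblock t x)) s = if s == t then x else 0.
Proof. exact: (blk_inblock_if t x s true). Qed.

Variables (N w : nat).

Lemma node_ext (L L' : {ffun 'I_N -> vec (r * k)}) zs n :
  (forall m (s : 'I_r), (s < n)%N ->
     blk (permv pi (L m)) s = blk (permv pi (L' m)) s) ->
  node w pi L zs n = node w pi L' zs n.
Proof.
elim: n => [//|n IH] same /=.
rewrite IH => [|m s lt_sn]; last by apply: same; apply: ltnW.
case: insubP => [s _ val_s|//].
by apply/setP => m; rewrite !inE same // val_s.
Qed.

Lemma node_S (L : {ffun 'I_N -> vec (r * k)}) zs (t : 'I_r) :
  node w pi L zs t.+1 = child w pi L (node w pi L zs t) t (zs t).
Proof. by rewrite /= valK. Qed.

End Blocks.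

Definition shift_list {N n : nat} (L : {ffun 'I_N -> vec n}) (D : 'I_N -> vec n)
  : {ffun 'I_N -> vec n} := [ffun m => L m + D m].

Lemma shift_listK N n (D : 'I_N -> vec n) : involutive (shift_list ^~ D).
Proof. by move=> L; apply/ffunP => m; rewrite !ffunE -addrA addvv addr0. Qed.

Section Translation.
Variables (r k N w g : nat) (pi : 'S_(r * k)) (t : 'I_r) (jl : 'I_N * 'I_N).

Definition pairs (i : nat) (om : Omega r k N) : {set 'I_N * 'I_N} :=
  finset.setX (node w pi om.1.1.1 om.2 i) (node w pi om.1.1.2 om.2 i).

Definition offsets (om : Omega r k N) : vec k * vec k :=
  (blk (permv pi (om.1.1.1 jl.1)) t + om.2 t,
   blk (permv pi (om.1.1.2 jl.2)) t + om.2 t).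

Definition at_dist : pred (vec k * vec k) := [predX sphere k w & sphere k w].

Lemma pairs_S om :
  (jl \in pairs t.+1 om) = (jl \in pairs t om) && at_dist (offsets om).
Proof. by rewrite !inE !node_S !inE andbACA. Qed.

(* Add [xy] to the t-th blocks of L1 j and L2 l; when j (resp. l) belongs
   to the planted pair (a, b), add the same vector to its partner, so that
   L1 a + L2 b is unchanged. *)
Definition translate (xy : vec k * vec k) (om : Omega r k N) : Omega r k N :=
  let X := inblock pi t xy.1 in let Y := inblock pi t xy.2 in
  let a := om.1.2.1 in let b := om.1.2.2 in
  ((shift_list om.1.1.1 (fun m => (if m == jl.1 then X else 0)
                           + (if (m == a) && (jl.2 == b) then Y else 0)),
    shift_list om.1.1.2 (fun m => (if m == jl.2 then Y else 0)
                           + (if (m == b) && (jl.1 == a) then X else 0))),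
   om.1.2, om.2).

Lemma translate_involutive xy : involutive (translate xy).
Proof. by case=> [[[L1 L2] [a b]] zs]; rewrite /translate /= !shift_listK. Qed.

Lemma translate_good xy om :
  (translate xy om \in good r k N g) = (om \in good r k N g).
Proof.
case: om => [[[L1 L2] [a b]] zs].
rewrite !inE /= !ffunE !eqxx /= (eq_sym a) (eq_sym b).
by rewrite (addrC (if jl.2 == b then _ else _)) addrACA addvv addr0.
Qed.

(* Only block t is modified, so A_t and B_t are unchanged. *)
Lemma translate_pairs xy om : pairs t (translate xy om) = pairs t om.
Proof.
have below (s : 'I_r) : (s < t)%N -> (s == t) = false.
  by move=> lt_st; apply/negbTE; rewrite neq_ltn lt_st.
case: om => [[[L1 L2] [a b]] zs]; rewrite /pairs /=.
by congr finset.setX; apply: node_ext => m s /below s_t;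
   rewrite ffunE !blk_permvD !blk_inblock_if s_t !andbF !addr0.
Qed.

Lemma translate_offsets xy om :
  om.1.2 != jl -> offsets (translate xy om) = offsets om + xy.
Proof.
case: om => [[[L1 L2] [a b]] zs] /= not_planted.
have planted : jl.1 == a -> jl.2 == b -> False.
  move=> /eqP ja /eqP lb; move: not_planted.
  by rewrite -ja -lb -surjective_pairing eqxx.
rewrite /offsets /= !ffunE !eqxx.
case: ifP => [/andP[ja lb] | _]; first by case: (planted ja lb).
case: ifP => [/andP[lb ja] | _]; first by case: (planted ja lb).
rewrite !addr0 !blk_permvD !blk_inblock eqxx.
by congr (_, _); rewrite addrAC.
Qed.

Lemma fresh_pair_average :
  (2 ^ k * 2 ^ k * \sum_(om in good r k N g)
       ((om.1.2 != jl) && (jl \in pairs t om) && at_dist (offsets om))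
   = 'C(k, w) * 'C(k, w) *
     \sum_(om in good r k N g) ((om.1.2 != jl) && (jl \in pairs t om)))%N.
Proof.
have := @translation_average _ _ (good r k N g)
  (fun om => (om.1.2 != jl) && (jl \in pairs t om)) offsets at_dist translate.
rewrite card_prod card_vec cardX card_sphere; apply.
- exact: translate_involutive.
- exact: translate_good.
- by move=> xy om; rewrite translate_pairs.
- by move=> xy om /andP[not_planted _]; apply: translate_offsets.
Qed.

End Translation.

Section Recurrence.
Variables (r k N w g : nat) (pi : 'S_(r * k)).

Definition total_size (i : nat) : nat :=
  \sum_(om in good r k N g) prodsize w pi i om.

Lemma total_size_pairs i :
  total_size i = (\sum_(om in good r k N g) \sum_jl (jl \in pairs w pi i om))%N.
Proof.
apply: eq_bigr => om _.
by rewrite /prodsize -cardsX -sum1_card big_mkcond.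
Qed.

Lemma total_size_root : total_size 0 = (#|good r k N g| * (N * N))%N.
Proof.
rewrite -sum_nat_const; apply: eq_bigr => om _.
by rewrite /prodsize /= cardsT card_ord.
Qed.

Lemma planted_once (om : Omega r k N) :
  (\sum_(jl : 'I_N * 'I_N) (om.1.2 == jl) = 1)%N.
Proof.
rewrite (bigD1 om.1.2) //= eqxx big1 // => jl /negbTE.
by rewrite eq_sym => ->.
Qed.

(* The counting form of the recurrence: 2^(2k) S_(t+1) is at most
   2^(2k) #|good| (planted pairs) + C(k, w)^2 S_t (all other pairs). *)
Lemma bucket_step (t : 'I_r) :
  (2 ^ k * 2 ^ k * total_size t.+1
     <= 2 ^ k * 2 ^ k * #|good r k N g| + 'C(k, w) * 'C(k, w) * total_size t)%N.
Proof.
set K := (2 ^ k * 2 ^ k)%N; set C2 := ('C(k, w) * 'C(k, w))%N.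
pose fresh jl (om : Omega r k N) :=
  (om.1.2 != jl) && (jl \in pairs w pi t om) && at_dist w (offsets pi t jl om).
have split_planted : (total_size t.+1
    <= #|good r k N g| + \sum_jl \sum_(om in good r k N g) fresh jl om)%N.
  apply: (@leq_trans (\sum_(om in good r k N g) (1 + \sum_jl fresh jl om))).
    rewrite total_size_pairs; apply: leq_sum => om _.
    rewrite -(planted_once om) -big_split /=; apply: leq_sum => jl _.
    by rewrite pairs_S /fresh; case: (om.1.2 == jl); case: (_ && _).
  by rewrite big_split /= sum1_card exchange_big.
have fresh_bound jl : (K * \sum_(om in good r k N g) fresh jl om
    <= C2 * \sum_(om in good r k N g) (jl \in pairs w pi t om))%N.
  rewrite fresh_pair_average leq_mul2l; apply/orP; right.
  by apply: leq_sum => om _; case: (_ != _).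
rewrite (leq_trans (leq_mul (leqnn K) split_planted)) // mulnDr leq_add2l.
rewrite total_size_pairs [in (C2 * _)%N]exchange_big !big_distrr /=.
by apply: leq_sum => jl _; apply: fresh_bound.
Qed.

End Recurrence.

(* Dividing the counting inequality by q^2 G gives the expectation
   recurrence; for an empty sample space (G = 0) all ratios vanish. *)
Lemma ratio_step (R : realFieldType) (a b G c q : R) : 0 <= G -> 0 < q ->
  q * q * a <= q * q * G + c * c * b -> a / G <= b / G * (c / q) ^+ 2 + 1.
Proof.
move=> G_ge0 q_gt0 h; have [->|G_neq0] := eqVneq G 0.
  by rewrite !invr0 !mulr0 mul0r add0r ler01.
have G_gt0 : 0 < G by rewrite lt_def G_neq0.
have -> : b / G * (c / q) ^+ 2 + 1 = (q * q * G + c * c * b) / (q * q) / G.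
  by field; rewrite !gt_eqF.
by rewrite ler_pM2r ?invr_gt0 // ler_pdivlMr ?mulr_gt0 // mulrC.
Qed.

Lemma affine_recurrence (R : realDomainType) (e : nat -> R) (q : R) n :
  0 <= q <= 1 -> (forall i, (i < n)%N -> e i.+1 <= e i * q + 1) ->
  e n <= e 0 * q ^+ n + n%:R.
Proof.
move=> /andP[q_ge0 q_le1]; elim: n => [|n IH] rec.
  by rewrite expr0 mulr1 addr0.
have IHn := IH (fun i lt_in => rec i (ltnW lt_in)).
apply: le_trans (rec n (ltnSn n)) _.
rewrite exprSr mulrA -natr1 addrA lerD2r.
apply: le_trans (ler_wpM2r q_ge0 IHn) _.
by rewrite mulrDl lerD2l ler_piMr ?ler0n.
Qed.

Unset Implicit Arguments.

Theorem mainTheorem6 (R : realType) (r k N : nat) (lam gam del : R)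
  (g w : nat) (pi : 'S_(r * k)) :
  (0 < r)%N ->
  N%:R = 2 `^ (lam * (r * k)%:R) ->
  0 <= gam <= 1 -> gam * (r * k)%:R = g%:R ->
  del * k%:R = w%:R ->
  let p : R := 'C(k, w)%:R / 2 ^+ k in
  let E (i : nat) : R := @Expect R r k N g (@prodsize r k N w pi i) in
  (forall i : nat, (1 <= i <= r)%N -> E i <= E i.-1 * p ^+ 2 + 1) /\
  E r <= 2 `^ (2 * lam * (r * k)%:R) * p ^+ (2 * r) + r%:R.
Proof.
move=> _ HN _ _ _ p E.
have p_ge0 : 0 <= p by rewrite divr_ge0.
have p2_bounds : 0 <= p ^+ 2 <= 1.
  rewrite exprn_ge0 //= expr_le1 // ler_pdivrMr ?exprn_gt0 // mul1r -natrX ler_nat.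
  by rewrite -card_sphere -card_vec max_card.
have step i : (1 <= i <= r)%N -> E i <= E i.-1 * p ^+ 2 + 1.
  case: i => // i /andP[_ lt_ir].
  have := @bucket_step r k N w g pi (Ordinal lt_ir).
  rewrite -(ler_nat R) !natrD !natrM !natrX.
  by apply: ratio_step; rewrite ?ler0n ?exprn_gt0.
have root : E 0 <= N%:R ^+ 2.
  move: (@total_size_root r k N w g pi); rewrite /total_size /E /Expect => ->.
  rewrite natrM; have [->|G_neq0] := eqVneq #|good r k N g| 0%N.
    by rewrite mul0r invr0 mulr0 exprn_ge0.
  by rewrite mulrC mulKf ?pnatr_eq0 // natrM expr2.
split=> //.
have unrolled := @affine_recurrence R E (p ^+ 2) r p2_bounds
  (fun i lt_ir => step i.+1 lt_ir).
apply: le_trans unrolled _.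
have -> : 2 `^ (2 * lam * (r * k)%:R) = N%:R ^+ 2 :> R.
  by rewrite -mulrA [2 * _]mulrC powRrM -HN powR_mulrn.
by rewrite -exprM lerD2r ler_wpM2r // exprn_ge0.
Qed.
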